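(* Let $w$ be an infinite word on $\mathcal{A}$ with infinitely many palindromic prefixes, and let $(n_i)_{i\ge1}$ be the increasing sequence of the lengths of its palindromic prefixes ($n_1=0$). The following are equivalent: (i) $n_{i+1}\le 2n_i+1$ for all $i\ge1$; (ii) there is a function $\psi$ (as in the context) with $w=w_\psi$; (iii) there is a reduced function $\psi$ with $w=w_\psi$. Moreover, the reduced function $\psi$ in (iii) is unique.
   Context: $\mathcal{A}$ is an alphabet (finite or infinite) disjoint from $\mathbb{N}^*=\{1,2,\dots\}$; $\varepsilon$ is a palindrome. The functions considered are maps $\psi:\mathbb{N}^*\to\mathbb{N}^*\sqcup\mathcal{A}$ such that for every $n\ge1$ either $\psi(n)\in\mathcal{A}$ or $1\le\psi(n)\le n-1$. Associated words: $\pi_1=\varepsilon$ and, for $i\ge1$: if $\psi(i)\in\mathcal{A}$, $\pi_{i+1}=\pi_i\,\psi(i)\,\pi_i$; if $\psi(i)\in\mathbb{N}^*$, then $\pi_{\psi(i)}$ is a prefix of $\pi_i$, and writing $\pi_i=\pi_{\psi(i)}b_i$, $\pi_{i+1}=\pi_ib_i$. Each $\pi_i$ is a palindrome and a proper prefix of $\pi_{i+1}$; $w_\psi$ is the infinite word having all $\pi_i$ as prefixes. Let $(t_k)_{k\ge0}$ be the (finite or infinite) family, in increasing order, of all $n\ge1$ with $\psi(n)\in\mathcal{A}$ or $1\le\psi(n)\le n-2$. $\psi$ is reduced if for every $k\ge1$ such that $t_k$ exists: $\psi(t_k)\neq\psi(t_{k-1})$, and either $\psi(t_k)\in\mathcal{A}$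 or $\psi(t_k)<t_{k-1}$. *)

From mathcomp Require Import all_boot.
Set Implicit Arguments. Unset Strict Implicit. Unset Printing Implicit Defensive.

(* The disjoint union N* ⊔ A is modelled by
   the sum type ((nat + A)%type): inl m = the integer m, inr a = the letter a.
   Functions psi : N* -> N* ⊔ A are modelled as psi : nat -> (nat + A)%type whose
   value at 0 is irrelevant (only arguments n >= 1 are ever used).
   Infinite words are w : nat -> A (letters indexed from 0). *)

Section Defs.
Variable A : Type.

Definition valid_psi (psi : nat -> (nat + A)%type) : Prop :=
  forall n, 1 <= n ->
    match psi n with inr _ => true | inl m => (1 <= m) && (m <= n.-1) end.

(* pis psi k = [:: pi_1; pi_2; ...; pi_(k+1)] *)
Fixpoint pis (psi : nat -> (nat + A)%type) (k : nat) : seq (seq A) :=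
  match k with
  | 0 => [:: [::]]
  | k'.+1 =>
      let l := pis psi k' in
      let p := last [::] l in
      rcons l (match psi k'.+1 with
               | inr a => p ++ a :: p
               | inl m => p ++ drop (size (nth [::] l m.-1)) p
                          (* pi_i = pi_(psi i) b_i, pi_(i+1) = pi_i b_i *)
               end)
  end.

Definition pi (psi : nat -> (nat + A)%type) (i : nat) : seq A :=
  nth [::] (pis psi i.-1) i.-1.

Definition prefix_of (s : seq A) (w : nat -> A) : Prop :=
  forall k, k < size s -> nth (w k) s k = w k.

Definition is_wpsi (psi : nat -> (nat + A)%type) (w : nat -> A) : Prop :=
  forall i, 1 <= i -> prefix_of (pi psi i) w.

(* t is one of the t_k : psi(t) ∈ A or 1 <= psi(t) <= t-2 *)
Definition in_T (psi : nat -> (nat + A)%type) (t : nat) : Prop :=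
  1 <= t /\ match psi t with inr _ => true | inl m => (1 <= m) && (m <= t - 2) end.

Definition reduced (psi : nat -> (nat + A)%type) : Prop :=
  forall s t, in_T psi s -> in_T psi t -> s < t ->
    (forall u, s < u -> u < t -> ~ in_T psi u) ->
    psi t <> psi s /\
    match psi t with inr _ => true | inl m => m < s end.

Definition pal_prefix (w : nat -> A) (n : nat) : Prop :=
  forall k, k < n -> w k = w (n.-1 - k).

Definition inf_pal_prefixes (w : nat -> A) : Prop :=
  forall N, exists n, N <= n /\ pal_prefix w n.

Definition pal_gap_cond (w : nat -> A) : Prop :=
  forall m m', pal_prefix w m -> pal_prefix w m' -> m < m' ->
    (forall u, m < u -> u < m' -> ~ pal_prefix w u) ->
    m' <= m.*2.+1.

End Defs.

(* Call pi_n exhaustive when pi_1, ..., pi_n are all the palindromic prefixes of pi_n.  A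
   palindrome x has period p iff its prefix of length |x| - p is a palindrome, so an exhaustive
   pi_n has an exhaustive successor pi_(n+1) exactly when pi_(n+1) has no period smaller than
   the jump |pi_(n+1)| - |pi_n|.  Between consecutive t_(k-1) = s < t_k = i the jump stays equal
   to d = |pi_(s+1)| - |pi_s|; by Fine and Wilf, pi_(i+1) has a period smaller than its jump iff
   it has period d, and this happens iff the reducedness condition at t_k fails.  Hence psi is
   reduced iff every pi_n is exhaustive, i.e. iff the pi_n are all the palindromic prefixes of
   w_psi in increasing order.  This gives uniqueness, and (i) -> (iii) by reading psi off the
   palindromic prefixes of w, each being a palindromic closure of a shorter one or of the form
   u a u.  Finally (ii) -> (i) because |pi_(n+1)| <= 2 |pi_n| + 1. *)

From Pilot Require Import Defs.
From mathcomp Require Import all_boot zify.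
From Stdlib Require Import Classical ClassicalEpsilon.
Set Implicit Arguments. Unset Strict Implicit. Unset Printing Implicit Defensive.

Lemma dvdn_lt_double d n : d %| n -> 0 < n < d.*2 -> n = d.
Proof. by rewrite -addnn; case/dvdnP=> [[|[|k]] ->]; rewrite ?mulSn ?mul0n; lia. Qed.

Section Words.
Variable T : Type.
Implicit Types (x : seq T) (a : T).

Definition palindrome x := rev x = x.

Definition period x p := forall a t, t + p < size x -> nth a x t = nth a x (t + p).

Lemma nth_palindrome x a t :
  palindrome x -> t < size x -> nth a x t = nth a x (size x - t.+1).
Proof. by move=> px ht; rewrite -{1}px nth_rev. Qed.

Lemma palindrome_nth a x :
  (forall t, t < size x -> nth a x t = nth a x (size x - t.+1)) -> palindrome x.
Proof.
move=> px; apply: (eq_from_nth (x0 := a)); first by rewrite size_rev.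
by move=> t; rewrite size_rev => ht; rewrite nth_rev // [RHS]px.
Qed.

Lemma period_take x p n : period x p -> period (take n x) p.
Proof.
move=> px a t; rewrite size_take_min => ht.
by rewrite !nth_take; [apply: px| |]; lia.
Qed.

Lemma period_nth_mod x p a t :
  0 < p -> period x p -> t < size x -> nth a x t = nth a x (t %% p).
Proof.
move=> p_gt0 px; elim: t {-2}t (leqnn t) => [|n IH] t ht hs.
  by rewrite (_ : t = 0) ?mod0n //; lia.
case: (ltnP t p) => htp; first by rewrite modn_small.
have -> : t = (t - p) + p by lia.
rewrite -px; last lia.
by rewrite modnDr IH //; lia.
Qed.

Lemma nth_mod_period x p :
  (forall a t, t < size x -> nth a x t = nth a x (t %% p)) -> period x p.
Proof.
move=> px a t ht; rewrite px; last lia.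
by rewrite (px a (t + p)) // modnDr.
Qed.

Lemma period_dvdn x q p n :
  0 < q -> 0 < p -> period x q -> p %| q -> q <= n -> period (take n x) p ->
  period x p.
Proof.
move=> q_gt0 p_gt0 xq pq qn xp; apply: nth_mod_period => a t ht.
have tq_lt : t %% q < q by rewrite ltn_mod.
have tq_le : t %% q <= t by apply: leq_mod.
have tqp_le : t %% q %% p <= t %% q by apply: leq_mod.
rewrite (period_nth_mod a q_gt0 xq ht) -(nth_take a (n0 := n)); last lia.
rewrite (period_nth_mod a p_gt0 xp); last by rewrite size_take_min; lia.
rewrite nth_take; last lia.
by rewrite -(modn_dvdm t pq).
Qed.

Lemma period_subn x p q :
  period x p -> period x q -> p < q -> p + q <= size x -> period x (q - p).
Proof.
move=> xp xq pq hs a t ht.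
case: (ltnP (t + q) (size x)) => h.
  by rewrite xq // (xp a (t + (q - p))); [congr nth|]; lia.
have -> : t = (t - p) + p by lia.
by rewrite -xp; [rewrite xq; [congr nth|]|]; lia.
Qed.

(* Fine and Wilf's theorem, with the weaker bound [p + q <= size x]. *)
Lemma period_gcdn x p q :
  period x p -> period x q -> 0 < p -> 0 < q -> p + q <= size x ->
  period x (gcdn p q).
Proof.
elim: (p + q) {-2}p {-2}q (leqnn (p + q)) => [|n IH] {}p {}q hn xp xq p_gt0 q_gt0 hs.
  lia.
case: (ltngtP p q) => pq; last by rewrite pq gcdnn.
- rewrite -(subnK (ltnW pq)) gcdnDr.
  by apply: IH => //; try lia; apply: period_subn => //; lia.
- rewrite -(subnK (ltnW pq)) gcdnC gcdnDr gcdnC.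
  by apply: IH => //; try lia; apply: period_subn => //; lia.
Qed.

Lemma palindrome_border_period x k :
  palindrome x -> k <= size x -> palindrome (take k x) -> period x (size x - k).
Proof.
move=> px hk pk a t ht.
rewrite [RHS](nth_palindrome _ px); last lia.
rewrite -(nth_take a (n0 := k)); last lia.
rewrite -[RHS](nth_take a (n0 := k)); last lia.
rewrite (nth_palindrome _ pk) size_take_min; last lia.
by congr nth; lia.
Qed.

Lemma palindrome_period_take x p :
  palindrome x -> period x p -> p <= size x -> palindrome (take (size x - p) x).
Proof.
move=> px xp hp; case E: x => [//|a0 x']; rewrite -E.
apply: (palindrome_nth (a := a0)) => t.
rewrite size_take_min => ht.
rewrite !nth_take; try lia.
rewrite xp; last lia.
by rewrite (nth_palindrome _ px); [congr nth|]; lia.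
Qed.

Lemma period_rcons x p a :
  period x p -> 0 < p -> p <= size x -> nth a x (size x - p) = a ->
  period (rcons x a) p.
Proof.
move=> xp p_gt0 hp xa b t; rewrite size_rcons => ht.
rewrite !nth_rcons.
case: (ltnP (t + p) (size x)) => h.
  have -> : t < size x by lia.
  exact: xp.
have -> : t < size x by lia.
have -> : t + p == size x by apply/eqP; lia.
by rewrite -xa (set_nth_default a); [congr nth|]; lia.
Qed.

Lemma palindrome_cat_cons x a : palindrome x -> palindrome (x ++ a :: x).
Proof. by move=> px; rewrite /palindrome rev_cat rev_cons px cat_rcons. Qed.

Lemma palindrome_cat_drop x k :
  palindrome x -> palindrome (take k x) -> palindrome (x ++ drop k x).
Proof.
move=> px pk; set y := drop k x; set z := take k x in pk *.
have E : z ++ y = x by rewrite cat_take_drop.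
have K : rev y ++ z = x by rewrite -{1}pk -rev_cat E.
by rewrite /palindrome rev_cat px -{2}K -catA E.
Qed.

End Words.

Section PsiWords.
Variables (A : Type) (psi : nat -> (nat + A)%type).
Hypothesis psi_valid : valid_psi psi.

Local Notation pi := (Defs.pi psi).
Local Notation len i := (size (pi i)).

Lemma size_pis k : size (pis psi k) = k.+1.
Proof. by elim: k => [|k IH] //=; rewrite size_rcons IH. Qed.

Lemma nth_pis k j : j <= k -> nth [::] (pis psi k) j = pi j.+1.
Proof.
elim: k => [|k IH] hj; first by have -> : j = 0 by lia.
case: (ltnP j k.+1) => h; last by have -> : j = k.+1 by lia.
by rewrite /= nth_rcons size_pis h IH.
Qed.

Lemma psi_index_lt i m : 0 < i -> psi i = inl m -> 0 < m < i.
Proof. by move=> i_gt0 E; have := psi_valid i_gt0; rewrite E => /andP[]; lia. Qed.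

Lemma pi_succ i : 0 < i ->
  pi i.+1 = match psi i with
            | inr a => pi i ++ a :: pi i
            | inl m => pi i ++ drop (len m) (pi i)
            end.
Proof.
case: i => [//|k] _.
rewrite /Defs.pi /= nth_rcons size_pis ltnn eqxx -nth_last size_pis /=.
case E: (psi k.+1) => [m|a] //.
have := psi_index_lt (ltn0Sn k) E.
by case: m {E} => [//|m] hm; rewrite (@nth_pis k m) //; lia.
Qed.

Lemma pi_succ_letter i a : 0 < i -> psi i = inr a -> pi i.+1 = pi i ++ a :: pi i.
Proof. by move=> i_gt0 E; rewrite pi_succ // E. Qed.

Lemma pi_succ_index i m : 0 < i -> psi i = inl m ->
  pi i.+1 = pi i ++ drop (len m) (pi i).
Proof. by move=> i_gt0 E; rewrite pi_succ // E. Qed.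

Lemma pi_prefix_chain i j : 0 < j <= i ->
  [/\ palindrome (pi j), take (len j) (pi i) = pi j & (j < i -> len j < len i)].
Proof.
elim: i j => [|i IH] j hj; first lia.
case: (posnP i) => [i0 | i_gt0].
  by rewrite i0 in hj *; have -> : j = 1 by lia.
have [pal_i _ _] := IH i (ltac:(lia)).
have [D [ED [D_gt0 pal_ED]]] :
    exists D, pi i.+1 = pi i ++ D /\ 0 < size D /\ palindrome (pi i ++ D).
  rewrite pi_succ //; case E: (psi i) => [m|a]; last first.
    by exists (a :: pi i); split => //; split => //; apply: palindrome_cat_cons.
  have hm := psi_index_lt i_gt0 E; have [pal_m take_m lt_m] := IH m (ltac:(lia)).
  exists (drop (len m) (pi i)); split => //; split.
    by rewrite size_drop; have := lt_m (ltac:(lia)); lia.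
  by apply: palindrome_cat_drop; rewrite // take_m.
case: (ltngtP j i.+1) => [lt_j | | ->]; [ | lia | by rewrite take_size ED; split => //; lia].
have [pal_j take_j lt_ji] := IH j (ltac:(lia)).
rewrite ED size_cat take_cat.
case: (ltngtP j i) => [lt_ij | | ->]; last by rewrite ltnn subnn take0 cats0; split => //; lia.
  by rewrite lt_ji // take_j; split => // _; have := lt_ji lt_ij; lia.
lia.
Qed.

Lemma pi_palindrome i : 0 < i -> palindrome (pi i).
Proof. by move=> i_gt0; have [] := @pi_prefix_chain i i (ltac:(lia)). Qed.

Lemma take_pi j i : 0 < j <= i -> take (len j) (pi i) = pi j.
Proof. by case/pi_prefix_chain. Qed.

Lemma size_pi_lt j i : 0 < j < i -> len j < len i.
Proof. by move=> hj; have [_ _] := @pi_prefix_chain i j (ltac:(lia)); apply; lia. Qed.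

Lemma size_pi_le j i : 0 < j <= i -> len j <= len i.
Proof.
case: (ltngtP j i) => [lt_ji | | ->] hj //; last lia.
by apply: ltnW; apply: size_pi_lt; lia.
Qed.

Lemma size_pi_inj j i : 0 < j -> 0 < i -> len j = len i -> j = i.
Proof.
move=> j_gt0 i_gt0 E; case: (ltngtP j i) => // lt.
  by have := @size_pi_lt j i (ltac:(lia)); lia.
by have := @size_pi_lt i j (ltac:(lia)); lia.
Qed.

Lemma leq_pred_size_pi i : 0 < i -> i.-1 <= len i.
Proof.
elim: i => [//|i IH] _; case: (posnP i) => [-> // | i_gt0].
by have := IH i_gt0; have := @size_pi_lt i i.+1 (ltac:(lia)); lia.
Qed.

Definition jump t := len t.+1 - len t.

Lemma size_pi_succ t : 0 < t -> len t.+1 = len t + jump t.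
Proof. by move=> t_gt0; have := @size_pi_lt t t.+1 (ltac:(lia)); rewrite /jump; lia. Qed.

Lemma jump_gt0 t : 0 < t -> 0 < jump t.
Proof. by move=> t_gt0; have := @size_pi_lt t t.+1 (ltac:(lia)); rewrite /jump; lia. Qed.

Lemma jump_index t m : 0 < t -> psi t = inl m -> jump t = len t - len m.
Proof. by move=> t_gt0 E; rewrite /jump (pi_succ_index t_gt0 E) size_cat size_drop; lia. Qed.

Lemma jump_letter t a : 0 < t -> psi t = inr a -> jump t = (len t).+1.
Proof. by move=> t_gt0 E; rewrite /jump (pi_succ_letter t_gt0 E) size_cat /=; lia. Qed.

Lemma jump_le t : 0 < t -> jump t <= (len t).+1.
Proof.
move=> t_gt0; case E: (psi t) => [m|a]; last by rewrite (jump_letter t_gt0 E).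
by rewrite (jump_index t_gt0 E); lia.
Qed.

Lemma jump_pred t : 1 < t -> jump t.-1 = len t - len t.-1.
Proof. by move=> t_gt1; rewrite /jump prednK //; lia. Qed.

Lemma period_pi_succ t : 0 < t -> period (pi t.+1) (jump t).
Proof.
move=> t_gt0; apply: palindrome_border_period; first exact: pi_palindrome.
  by apply: size_pi_le; lia.
by rewrite take_pi; [exact: pi_palindrome | lia].
Qed.

Lemma period_pi t : 1 < t -> period (pi t) (jump t.-1).
Proof. by move=> t_gt1; have := @period_pi_succ t.-1 (ltac:(lia)); rewrite prednK //; lia. Qed.

Lemma period_pi_le j i p : 0 < j <= i -> period (pi i) p -> period (pi j) p.
Proof. by move=> hj /(period_take (n := len j)); rewrite take_pi. Qed.

Lemma period_pi_dvdn j i p q :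
  0 < j <= i -> 0 < q -> 0 < p -> period (pi i) q -> p %| q -> q <= len j ->
  period (pi j) p -> period (pi i) p.
Proof.
move=> hj q_gt0 p_gt0 per_q pq le_q; rewrite -(take_pi hj) => per_p.
exact: (period_dvdn q_gt0 p_gt0 per_q pq le_q per_p).
Qed.

Lemma in_T_jump_lt t : 1 < t -> in_T psi t -> jump t.-1 < jump t.
Proof.
move=> t_gt1 [_]; have t_gt0 : 0 < t by lia.
have lt_pred := @size_pi_lt t.-1 t (ltac:(lia)); rewrite jump_pred //.
case E: (psi t) => [m|a] hm; last by rewrite (jump_letter t_gt0 E); lia.
have := @size_pi_lt m t.-1 (ltac:(lia)).
by rewrite (jump_index t_gt0 E); lia.
Qed.

Definition exhaustive n :=
  forall k, k <= len n -> palindrome (take k (pi n)) -> exists2 j, 0 < j <= n & len j = k.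

Lemma exhaustive1 : exhaustive 1.
Proof. by move=> k; rewrite leqn0 => /eqP -> _; exists 1. Qed.

Lemma exhaustive_le j n : 0 < j <= n -> exhaustive n -> exhaustive j.
Proof.
move=> hj exh k hk pal_k.
have le_k : k <= len n by have := size_pi_le hj; lia.
rewrite -(take_pi hj) take_takel // in pal_k.
have [j' hj' Ej'] := exh k le_k pal_k; exists j' => //.
case: (leqP j' j) => [|lt_jj']; first lia.
by have := @size_pi_lt j j' (ltac:(lia)); lia.
Qed.

Lemma exhaustive_period n f : exhaustive n -> 0 < n -> period (pi n) f -> 0 < f <= len n ->
  exists2 j, 0 < j < n & len j = len n - f.
Proof.
move=> exh n_gt0 per_f hf.
have [|j hj Ej] := exh _ (leq_subr f _) (palindrome_period_take (pi_palindrome n_gt0) per_f _).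
  lia.
by exists j => //; case: (ltngtP j n) => [| |ej]; [lia | lia | rewrite ej in Ej; lia].
Qed.

Lemma exhaustive_period_ge n f : exhaustive n -> 1 < n -> period (pi n) f -> 0 < f <= len n ->
  jump n.-1 <= f.
Proof.
move=> exh n_gt1 per_f hf; have [j hj Ej] := exhaustive_period exh (ltnW n_gt1) per_f hf.
by have := @size_pi_le j n.-1 (ltac:(lia)); rewrite jump_pred //; lia.
Qed.

Lemma exhaustive_succE i : 0 < i -> exhaustive i ->
  exhaustive i.+1 <-> forall f, 0 < f < jump i -> ~ period (pi i.+1) f.
Proof.
move=> i_gt0 exh; have lt_len := @size_pi_lt i i.+1 (ltac:(lia)); rewrite /jump; split.
  move=> exh' f hf per_f.
  have [j hj Ej] := exhaustive_period exh' (ltn0Sn i) per_f (ltac:(lia)).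
  by have := @size_pi_le j i (ltac:(lia)); lia.
move=> no_per k hk pal_k; case: (leqP k (len i)) => [le_k | lt_k].
  have [|j hj <-] := exh k le_k; last by exists j => //; lia.
  by rewrite -(@take_pi i i.+1) ?take_takel //; lia.
case: (ltngtP k (len i.+1)) => [lt_k' | | ->]; [ | lia | by exists i.+1 => //; lia].
exfalso; apply: (no_per (len i.+1 - k)); first lia.
by apply: (palindrome_border_period (pi_palindrome (ltn0Sn i)) _ pal_k); lia.
Qed.

Lemma in_T1 : in_T psi 1.
Proof. by split => //; have := psi_valid (leqnn 1); case: (psi 1) => // m; lia. Qed.

Lemma notin_T_psi u : 1 < u -> ~ in_T psi u -> psi u = inl u.-1.
Proof.
move=> u_gt1 notT; have := psi_valid (ltnW u_gt1); case E: (psi u) => [m|a] hm.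
  case: (ltnP m u.-1) => lt_m; last by congr inl; lia.
  by case: notT; split; [lia | rewrite E; apply/andP; lia].
by case: notT; split; [lia | rewrite E].
Qed.

Lemma prev_in_T i : 1 < i ->
  exists s, [/\ in_T psi s, s < i & forall u, s < u < i -> ~ in_T psi u].
Proof.
elim: i => [//|i IH] i_gt0; case: (ltngtP i 1) => [| lt_1 | ->]; first lia.
  case: (classic (in_T psi i)) => inT; first by exists i; split => // u; lia.
  have [s [inT_s lt_s gap_s]] := IH lt_1; exists s; split => [//||u hu]; first lia.
  by case: (ltngtP u i) => [lt_u | | ->]; [apply: gap_s; lia | lia | done].
by exists 1; split => [|//|u]; [exact: in_T1 | lia].
Qed.

Lemma exhaustive_succ_notin_T i : 1 < i -> ~ in_T psi i -> exhaustive i -> exhaustive i.+1.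
Proof.
move=> i_gt1 notT exh; apply/(exhaustive_succE (ltnW i_gt1) exh) => f hf per_f.
have E := notin_T_psi i_gt1 notT.
have := exhaustive_period_ge exh i_gt1 (@period_pi_le i i.+1 f (ltac:(lia)) per_f).
by move: hf; rewrite (jump_index (ltnW i_gt1) E) jump_pred //; lia.
Qed.

Lemma exhaustive2 : exhaustive 2.
Proof.
apply/(exhaustive_succE (ltn0Sn 0) exhaustive1) => f hf; exfalso.
have := psi_valid (ltn0Sn 0); case E: (psi 1) => [m|a]; first lia.
by move: hf; rewrite (jump_letter (ltn0Sn 0) E) (_ : len 1 = 0) //; lia.
Qed.

End PsiWords.

Section Run.
Variables (A : Type) (psi : nat -> (nat + A)%type) (i s : nat).
Hypotheses (psi_valid : valid_psi psi) (i_gt1 : 1 < i) (inT_i : in_T psi i)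
  (inT_s : in_T psi s) (lt_si : s < i) (gap_si : forall u, s < u < i -> ~ in_T psi u)
  (exh_i : exhaustive psi i).

Local Notation pi := (Defs.pi psi).
Local Notation len i := (size (pi i)).
Local Notation jump := (jump psi).

Lemma run_start_gt0 : 0 < s.
Proof. by case: inT_s. Qed.

Lemma jump_run u : s <= u < i -> jump u = jump s.
Proof.
have s_gt0 := run_start_gt0.
elim: u => [|u IH] hu; first lia.
case: (ltngtP s u.+1) => [lt_su | | <-] //; last lia.
have notT := gap_si (ltac:(lia) : s < u.+1 < i).
have E := @notin_T_psi _ _ psi_valid u.+1 (ltac:(lia)) notT.
by rewrite (jump_index psi_valid (ltn0Sn u) E) -(jump_pred psi) ?IH //; lia.
Qed.

Lemma size_pi_run u : s <= u <= i -> len u = len s + (u - s) * jump s.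
Proof.
have s_gt0 := run_start_gt0.
elim: u => [|u IH] hu; first lia.
case: (ltngtP s u.+1) => [lt_su | | <-]; [ | lia | by rewrite subnn mul0n addn0].
rewrite (size_pi_succ psi_valid (ltac:(lia) : 0 < u)) jump_run; last lia.
by rewrite IH ?subSn ?mulSn; lia.
Qed.

Lemma size_pi_diff_run j : s <= j <= i -> len i - len j = (i - j) * jump s.
Proof.
move=> hj; rewrite (size_pi_run hj) (size_pi_run (ltac:(lia) : s <= i <= i)).
by rewrite -(_ : (i - s) - (j - s) = i - j) ?mulnBl; lia.
Qed.

Lemma dvdn_jump_size_pi_run : jump s %| len i - len s.
Proof. by rewrite size_pi_diff_run ?dvdn_mull ?dvdnn; lia. Qed.

Lemma size_pi_run_ge : len s + jump s <= len i.
Proof.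
have s_gt0 := run_start_gt0.
by rewrite -(size_pi_succ psi_valid) //; apply: (size_pi_le psi_valid); lia.
Qed.

Lemma jump_pred_run : jump i.-1 = jump s.
Proof. by rewrite jump_run //; lia. Qed.

Lemma period_pi_run : period (pi i) (jump s).
Proof. by rewrite -jump_pred_run; apply: period_pi. Qed.

Lemma jump_lt_run : jump s < jump i.
Proof. by rewrite -jump_pred_run; apply: in_T_jump_lt. Qed.

Lemma size_pi_pred_lt_jump_run : 1 < s -> len s.-1 < jump s.
Proof.
move=> s_gt1; have s_gt0 : 0 < s by lia.
have lt_pred := @size_pi_lt _ _ psi_valid s.-1 s (ltac:(lia)).
case E: (psi s) => [m0|a]; last by rewrite (jump_letter psi_valid s_gt0 E); lia.
have jump_s := in_T_jump_lt psi_valid s_gt1 inT_s.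
have jump_s_gt0 := jump_gt0 psi_valid s_gt0.
have le_jump_s : jump s <= len s by rewrite (jump_index psi_valid s_gt0 E); lia.
rewrite ltnNge; apply/negP => le_d.
have per_s := period_pi_le psi_valid (ltac:(lia) : 0 < s <= s.+1) (period_pi_succ psi_valid s_gt0).
have jump_pred_gt0 := @jump_gt0 _ _ psi_valid s.-1 (ltac:(lia)).
have := period_gcdn (period_pi psi_valid s_gt1) per_s jump_pred_gt0 jump_s_gt0
  (ltac:(rewrite jump_pred //; lia)).
set g := gcdn _ _ => per_g.
have g_gt0 : 0 < g by rewrite gcdn_gt0 jump_s_gt0 orbT.
have le_g : g <= jump s.-1 by apply: dvdn_leq; [lia | apply: dvdn_gcdl].
have per_g' : period (pi s.+1) g.
  apply: (@period_pi_dvdn _ _ psi_valid s s.+1 g (jump s)) => //;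
    [lia | exact: period_pi_succ | exact: dvdn_gcdr].
have exh_s : exhaustive psi s.+1 by apply: (exhaustive_le psi_valid _ exh_i); lia.
have := size_pi_le psi_valid (ltac:(lia) : 0 < s <= s.+1).
rewrite jump_pred // in jump_s le_g => le_len.
have : jump s <= g by apply: (exhaustive_period_ge psi_valid exh_s (ltnW s_gt1) per_g'); lia.
lia.
Qed.

Lemma nth_pi_run_letter a b : psi s = inr a -> nth b (pi i) (len i.-1) = a.
Proof.
move=> E; have s_gt0 := run_start_gt0.
have jump_gt0 := jump_gt0 psi_valid s_gt0.
have lt_pred := @size_pi_lt _ _ psi_valid i.-1 i (ltac:(lia)).
have lt_s := @size_pi_lt _ _ psi_valid s i (ltac:(lia)).
have lt_s' := @size_pi_lt _ _ psi_valid s s.+1 (ltac:(lia)).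
rewrite (period_nth_mod b jump_gt0 period_pi_run lt_pred).
rewrite (size_pi_run (ltac:(lia) : s <= i.-1 <= i)) addnC modnMDl.
rewrite -(period_nth_mod b jump_gt0 period_pi_run lt_s).
rewrite -(nth_take b (n0 := len s.+1)); last lia.
rewrite (@take_pi _ _ psi_valid s.+1 i); last lia.
by rewrite (pi_succ_letter psi_valid s_gt0 E) nth_cat ltnn subnn.
Qed.

Lemma period_succ_run_dvdn : jump s %| jump i -> jump i <= len i -> period (pi i.+1) (jump s).
Proof.
move=> dvd le_jump; have i_gt0 : 0 < i by lia.
apply: (period_pi_dvdn psi_valid _ (jump_gt0 psi_valid i_gt0) (jump_gt0 psi_valid run_start_gt0)
  (period_pi_succ psi_valid i_gt0) dvd le_jump period_pi_run); lia.
Qed.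

Lemma period_pi_succ_run :
  psi i = psi s \/ (exists2 m, psi i = inl m & s <= m) -> period (pi i.+1) (jump s).
Proof.
have s_gt0 := run_start_gt0; have i_gt0 : 0 < i by lia.
have ge_i := size_pi_run_ge.
have dvd_step : jump s %| len i - len s + jump s by rewrite dvdn_add ?dvdn_jump_size_pi_run.
case E: (psi i) => [m|a] H.
  have hm := psi_index_lt psi_valid i_gt0 E.
  apply: period_succ_run_dvdn; rewrite (jump_index psi_valid i_gt0 E); last lia.
  case: H => [Es | [m' [<-] le_sm]].
    have Ed := jump_index psi_valid s_gt0 (esym Es).
    by rewrite (_ : _ - _ = len i - len s + jump s) //; have := jump_gt0 psi_valid s_gt0; lia.
  by rewrite size_pi_diff_run; [exact: dvdn_mull | lia].
case: H => [Es | [m' //]].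
have Ed := jump_letter psi_valid s_gt0 (esym Es).
have Ee := jump_letter psi_valid i_gt0 E.
have dvd : jump s %| jump i by rewrite Ee (_ : _.+1 = len i - len s + jump s) //; lia.
have take_i : take (len i).+1 (pi i.+1) = rcons (pi i) a.
  by rewrite (pi_succ_letter psi_valid i_gt0 E) take_cat ltnNge leqnSn /= subSnn /= take0 cats1.
apply: (period_dvdn (jump_gt0 psi_valid i_gt0) (jump_gt0 psi_valid s_gt0)
  (period_pi_succ psi_valid i_gt0) dvd (_ : jump i <= (len i).+1)); first lia.
rewrite take_i.
have le_jump : jump s <= len i by rewrite -jump_pred_run jump_pred //; lia.
apply: period_rcons => //; [exact: period_pi_run | exact: jump_gt0 |].
rewrite (_ : len i - jump s = len i.-1) ?(nth_pi_run_letter a (esym Es)) //.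
by rewrite -jump_pred_run jump_pred //; have := @size_pi_lt _ _ psi_valid i.-1 i; lia.
Qed.

Lemma dvdn_jump_run : period (pi i.+1) (jump s) -> jump s %| jump i.
Proof.
move=> per_s; have i_gt0 : 0 < i by lia.
have jump_s_gt0 := jump_gt0 psi_valid run_start_gt0.
have lt_jump := jump_lt_run.
have le_jump : jump s <= len i by rewrite -jump_pred_run jump_pred //; lia.
have := period_gcdn per_s (period_pi_succ psi_valid i_gt0) jump_s_gt0 (ltac:(lia))
  (ltac:(rewrite (size_pi_succ psi_valid i_gt0); lia)).
set h := gcdn _ _ => per_h.
have h_le : h <= jump s by apply: dvdn_leq => //; apply: dvdn_gcdl.
have h_gt0 : 0 < h by rewrite gcdn_gt0 jump_s_gt0.
have per_h' := period_pi_le psi_valid (ltac:(lia) : 0 < i <= i.+1) per_h.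
have := exhaustive_period_ge psi_valid exh_i i_gt1 per_h' (ltac:(lia)).
by rewrite jump_pred_run => ge_h; rewrite (_ : jump s = h); [apply: dvdn_gcdr | lia].
Qed.

Lemma not_period_pi_succ_run :
  psi i <> psi s /\ (if psi i is inl m then m < s else true) -> ~ period (pi i.+1) (jump s).
Proof.
move=> [ne_psi lt_psi] per_s; have dvd := dvdn_jump_run per_s.
have s_gt0 := run_start_gt0; have i_gt0 : 0 < i by lia.
have ge_i := size_pi_run_ge; have dvd_run := dvdn_jump_size_pi_run.
case Ei: (psi i) ne_psi lt_psi => [m|a] ne_psi lt_m.
  have hm := psi_index_lt psi_valid i_gt0 Ei.
  have lt_ms := @size_pi_lt _ _ psi_valid m s (ltac:(lia)).
  rewrite (jump_index psi_valid i_gt0 Ei) in dvd.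
  rewrite (_ : _ - len m = len i - len s + (len s - len m)) ?(dvdn_addr _ dvd_run) in dvd;
    last lia.
  case Es: (psi s) ne_psi => [m0|a0] ne_psi; last first.
    by rewrite (jump_letter psi_valid s_gt0 Es) in dvd; have := dvdn_leq _ dvd; lia.
  have hm0 := psi_index_lt psi_valid s_gt0 Es.
  have s_gt1 : 1 < s by lia.
  have := size_pi_pred_lt_jump_run s_gt1; have := in_T_jump_lt psi_valid s_gt1 inT_s.
  rewrite jump_pred // => lt_jump_s lt_pred_s.
  have := dvdn_lt_double dvd (ltac:(lia)); rewrite (jump_index psi_valid s_gt0 Es) => eq_m.
  by apply: ne_psi; congr inl; apply: (size_pi_inj psi_valid); lia.
rewrite (jump_letter psi_valid i_gt0 Ei) in dvd.
case Es: (psi s) ne_psi => [m0|a0] ne_psi.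
  rewrite (_ : _.+1 = len i - len s + (len s).+1) ?(dvdn_addr _ dvd_run) in dvd; last lia.
  have hm0 := psi_index_lt psi_valid s_gt0 Es.
  have s_gt1 : 1 < s by lia.
  have := size_pi_pred_lt_jump_run s_gt1; have := in_T_jump_lt psi_valid s_gt1 inT_s.
  have Ed := jump_index psi_valid s_gt0 Es.
  rewrite jump_pred // => lt_jump_s lt_pred_s.
  by have := dvdn_lt_double dvd (ltac:(lia)); lia.
apply: ne_psi; congr inr.
have lt_pred := @size_pi_lt _ _ psi_valid i.-1 i (ltac:(lia)).
have Epred : len i.-1 + jump s = len i by rewrite -jump_pred_run jump_pred //; lia.
have := per_s a (len i.-1).
rewrite (pi_succ_letter psi_valid i_gt0 Ei) Epred size_cat /=; move/(_ (ltac:(lia))).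
by rewrite !nth_cat ltnn subnn lt_pred (nth_pi_run_letter a Es).
Qed.

Lemma reduced_at_run : exhaustive psi i.+1 ->
  psi i <> psi s /\ (if psi i is inl m then m < s else true).
Proof.
move=> exh'; have := (exhaustive_succE psi_valid (ltnW i_gt1) exh_i).1 exh' (jump s).
have := jump_gt0 psi_valid run_start_gt0; have := jump_lt_run.
move=> lt_jump jump_gt0 /(_ (ltac:(lia))) not_per.
apply: NNPP => not_red; apply: not_per; apply: period_pi_succ_run.
case E: (psi i) not_red => [m|a] not_red; last first.
  by left; apply: NNPP => ne; exact: not_red (conj ne isT).
case: (leqP s m) => [le_sm | lt_ms]; first by right; exists m.
by left; apply: NNPP => ne; exact: not_red (conj ne lt_ms).
Qed.

Lemma exhaustive_succ_run :
  psi i <> psi s /\ (if psi i is inl m then m < s else true) -> exhaustive psi i.+1.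
Proof.
move=> red_i.
apply/(exhaustive_succE psi_valid (ltnW i_gt1) exh_i) => f hf per_f.
have i_gt0 : 0 < i by lia.
have le_jump := jump_le psi_valid i_gt0.
have := period_gcdn per_f (period_pi_succ psi_valid i_gt0) (ltac:(lia)) (ltac:(lia))
  (ltac:(rewrite (size_pi_succ psi_valid i_gt0); lia)).
set g := gcdn f _ => per_g.
have g_gt0 : 0 < g by rewrite gcdn_gt0; apply/orP; left; lia.
have g_le : g <= f by apply: dvdn_leq; [lia | apply: dvdn_gcdl].
have g_dvd : g %| jump i by apply: dvdn_gcdr.
have per_g' := period_pi_le psi_valid (ltac:(lia) : 0 < i <= i.+1) per_g.
have [j hj Ej] := exhaustive_period psi_valid exh_i i_gt0 per_g' (ltac:(lia)).
case: (leqP s j) => [le_sj | lt_js].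
  apply: (not_period_pi_succ_run red_i).
  have s_dvd : jump s %| g.
    have := size_pi_diff_run (ltac:(lia) : s <= j <= i).
    by rewrite (_ : len i - len j = g) => [->|]; [apply: dvdn_mull | lia].
  apply: (period_pi_dvdn psi_valid _ g_gt0 _ per_g s_dvd _ period_pi_run); [lia | | lia].
  exact: jump_gt0 run_start_gt0.
have s_gt1 : 1 < s by lia.
have := size_pi_pred_lt_jump_run s_gt1.
have := @size_pi_le _ _ psi_valid j s.-1 (ltac:(lia)).
have := @size_pi_lt _ _ psi_valid j s (ltac:(lia)).
have := size_pi_run_ge.
by move=> *; have := dvdn_lt_double g_dvd (ltac:(lia)); lia.
Qed.

End Run.

Definition reduced_at A (psi : nat -> (nat + A)%type) t :=
  forall s, in_T psi s -> in_T psi t -> s < t -> (forall u, s < u -> u < t -> ~ in_T psi u) ->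
    psi t <> psi s /\ match psi t with inr _ => true | inl m => m < s end.

Section Reduced.
Variables (A : Type) (psi : nat -> (nat + A)%type).
Hypothesis psi_valid : valid_psi psi.

Lemma exhaustive_succE_reduced_at i : 0 < i -> exhaustive psi i ->
  exhaustive psi i.+1 <-> reduced_at psi i.
Proof.
move=> i_gt0 exh_i; case: (ltngtP i 1) => [| i_gt1 | ->]; first lia; last first.
  by split => [_ s [s_gt0 _] _ lt_s1 | _]; [lia | exact: exhaustive2].
case: (classic (in_T psi i)) => [inT_i | notT]; last first.
  by split => [_ s _ /notT // | _]; exact: exhaustive_succ_notin_T.
have [s [inT_s lt_si gap_si]] := prev_in_T psi_valid i_gt1.
split => [exh' s' inT_s' _ lt_s'i gap_s' | red_i].
  have -> : s' = s.
    case: (ltngtP s' s) => [lt_s's | lt_ss' | //]; first by case: (gap_s' s lt_s's lt_si).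
    by case: (gap_si s' (ltac:(lia)) inT_s').
  exact: (reduced_at_run psi_valid i_gt1 inT_i inT_s lt_si gap_si exh_i).
apply: (exhaustive_succ_run psi_valid i_gt1 inT_i inT_s lt_si gap_si exh_i).
by apply: red_i => // u hsu hui; apply: gap_si; lia.
Qed.

Lemma reduced_exhaustiveP : reduced psi <-> forall i, 0 < i -> exhaustive psi i.
Proof.
have reducedE : reduced psi <-> forall t, reduced_at psi t.
  by split=> red => [t s | s t]; apply: red.
rewrite reducedE; split => [red i i_gt0 | exh i].
  elim: i i_gt0 => [//|i IH] _; case: (posnP i) => [-> | i_gt0]; first exact: exhaustive1.
  by apply/(exhaustive_succE_reduced_at i_gt0 (IH i_gt0)).
case: (posnP i) => [-> s [] // | i_gt0].
by apply/(exhaustive_succE_reduced_at i_gt0 (exh i i_gt0)); apply: exh.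
Qed.

End Reduced.

Section WPsi.
Variables (A : Type) (w : nat -> A) (psi : nat -> (nat + A)%type).
Hypotheses (psi_valid : valid_psi psi) (w_psi : is_wpsi psi w).

Local Notation pi := (Defs.pi psi).
Local Notation len i := (size (pi i)).

Lemma nth_pi_word a i k : 0 < i -> k < len i -> nth a (pi i) k = w k.
Proof. by move=> i_gt0 hk; rewrite (set_nth_default (w k)) //; exact: w_psi. Qed.

Lemma pal_prefix_size_pi i : 0 < i -> pal_prefix w (len i).
Proof.
move=> i_gt0 k hk.
rewrite -(nth_pi_word (w 0) i_gt0 hk) -(nth_pi_word (w 0) i_gt0 (k := (len i).-1 - k)); last lia.
by rewrite (nth_palindrome _ (pi_palindrome psi_valid i_gt0) hk); congr nth; lia.
Qed.

Lemma palindrome_take_pi i k : 0 < i -> k <= len i -> pal_prefix w k ->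
  palindrome (take k (pi i)).
Proof.
move=> i_gt0 hk pal_k; apply: (palindrome_nth (a := w 0)) => t; rewrite size_takel // => ht.
rewrite !nth_take ?nth_pi_word; try lia.
by rewrite pal_k //; congr w; lia.
Qed.

Lemma pal_gap_cond_wpsi : pal_gap_cond w.
Proof.
move=> m m' pal_m pal_m' lt_mm' gap_m.
have ex_i : exists i, (0 < i) && (len i <= m) by exists 1.
have bound_i i : (0 < i) && (len i <= m) -> i <= m.+1.
  by case/andP=> i_gt0; have := leq_pred_size_pi psi_valid i_gt0; lia.
case: (ex_maxnP ex_i bound_i) => i /andP[i_gt0 le_im] max_i.
have lt_mi : m < len i.+1.
  by rewrite ltnNge; apply/negP => le; have := max_i i.+1; rewrite le => /(_ isT); lia.
have := jump_le psi_valid i_gt0; rewrite /jump.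
case: (leqP m' (len i.+1)) => [|lt_i]; first lia.
by case: (gap_m (len i.+1) lt_mi lt_i); apply: pal_prefix_size_pi.
Qed.

Lemma size_pi_succ_next_pal i k : (forall i, 0 < i -> exhaustive psi i) -> 0 < i ->
  pal_prefix w k -> len i < k -> len i.+1 <= k.
Proof.
move=> exh i_gt0 pal_k lt_k; rewrite leqNgt; apply/negP => lt_k'.
have := palindrome_take_pi (ltn0Sn i) (ltnW lt_k') pal_k.
case/(exh _ (ltn0Sn i) _ (ltnW lt_k')) => j hj Ej.
case: (ltngtP j i.+1) => [lt_j | | eq_j]; [ | lia | by rewrite eq_j in Ej; lia].
by have := @size_pi_le _ _ psi_valid j i (ltac:(lia)); lia.
Qed.

End WPsi.

Section Uniqueness.
Variables (A : Type) (w : nat -> A) (psi1 psi2 : nat -> (nat + A)%type).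
Hypotheses (valid1 : valid_psi psi1) (valid2 : valid_psi psi2).
Hypotheses (red1 : reduced psi1) (red2 : reduced psi2).
Hypotheses (w_psi1 : is_wpsi psi1 w) (w_psi2 : is_wpsi psi2 w).

Local Notation len1 i := (size (Defs.pi psi1 i)).
Local Notation len2 i := (size (Defs.pi psi2 i)).

Lemma size_pi_reduced_unique i : 0 < i -> len1 i = len2 i.
Proof.
have exh1 := (reduced_exhaustiveP valid1).1 red1.
have exh2 := (reduced_exhaustiveP valid2).1 red2.
elim: i => [//|i IH] _; case: (posnP i) => [-> // | i_gt0].
have := size_pi_succ_next_pal valid1 w_psi1 exh1 i_gt0
  (pal_prefix_size_pi valid2 w_psi2 (ltn0Sn i)).
have := size_pi_succ_next_pal valid2 w_psi2 exh2 i_gt0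
  (pal_prefix_size_pi valid1 w_psi1 (ltn0Sn i)).
have := @size_pi_lt _ _ valid1 i i.+1 (ltac:(lia)).
have := @size_pi_lt _ _ valid2 i i.+1 (ltac:(lia)).
by rewrite IH //; lia.
Qed.

Lemma psi_reduced_unique n : 0 < n -> psi1 n = psi2 n.
Proof.
move=> n_gt0; have E := size_pi_reduced_unique (ltn0Sn n).
have E0 := size_pi_reduced_unique n_gt0.
rewrite !(size_pi_succ _ n_gt0) // E0 in E; move/addnI: E.
case E1: (psi1 n) => [m1|a1]; case E2: (psi2 n) => [m2|a2].
- rewrite (jump_index valid1 n_gt0 E1) (jump_index valid2 n_gt0 E2) E0.
  have [m1_gt0 _] := andP (psi_index_lt valid1 n_gt0 E1).
  have [m2_gt0 _] := andP (psi_index_lt valid2 n_gt0 E2).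
  have := @size_pi_lt _ _ valid2 m2 n (psi_index_lt valid2 n_gt0 E2).
  have := @size_pi_lt _ _ valid1 m1 n (psi_index_lt valid1 n_gt0 E1).
  rewrite -(size_pi_reduced_unique m2_gt0) => *.
  by congr inl; apply: (size_pi_inj valid1); lia.
- by rewrite (jump_index valid1 n_gt0 E1) (jump_letter valid2 n_gt0 E2) E0; lia.
- by rewrite (jump_letter valid1 n_gt0 E1) (jump_index valid2 n_gt0 E2) E0; lia.
move=> _; congr inr.
have e1 : nth (w 0) (Defs.pi psi1 n.+1) (len1 n) = a1.
  by rewrite (pi_succ_letter valid1 n_gt0 E1) nth_cat ltnn subnn.
have e2 : nth (w 0) (Defs.pi psi2 n.+1) (len1 n) = a2.
  by rewrite (pi_succ_letter valid2 n_gt0 E2) nth_cat E0 ltnn subnn.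
have lt1 := @size_pi_lt _ _ valid1 n n.+1 (ltac:(lia)).
have lt2 := @size_pi_lt _ _ valid2 n n.+1 (ltac:(lia)).
rewrite -e1 -e2 (nth_pi_word w_psi1 _ (ltn0Sn n) lt1).
by rewrite (nth_pi_word w_psi2 _ (ltn0Sn n)) //; lia.
Qed.

End Uniqueness.

Section WordToPsi.
Variables (A : Type) (w : nat -> A).
Hypotheses (w_inf : inf_pal_prefixes w) (w_gap : pal_gap_cond w).

Definition pal_prefixb n : bool :=
  if excluded_middle_informative (pal_prefix w n) then true else false.

Lemma pal_prefixbP n : reflect (pal_prefix w n) (pal_prefixb n).
Proof. by rewrite /pal_prefixb; case: excluded_middle_informative => h; constructor. Qed.

Lemma exists_next_pal n : exists m, (n < m) && pal_prefixb m.
Proof. by have [m [hm /pal_prefixbP]] := w_inf n.+1; exists m; apply/andP. Qed.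

Definition next_pal n := ex_minn (exists_next_pal n).

Lemma next_palP n :
  [/\ n < next_pal n, pal_prefix w (next_pal n) &
      forall m, n < m -> pal_prefix w m -> next_pal n <= m].
Proof.
rewrite /next_pal; case: ex_minnP => m /andP[lt_m /pal_prefixbP pal_m] min_m.
by split => // k lt_k /pal_prefixbP pal_k; apply: min_m; rewrite lt_k.
Qed.

Fixpoint pal_len k := if k is k'.+1 then next_pal (pal_len k') else 0.

Lemma pal_prefix_pal_len k : pal_prefix w (pal_len k).
Proof. by case: k => [|k] /=; [move=> t | case: (next_palP (pal_len k))]. Qed.

Lemma pal_len_lt k : pal_len k < pal_len k.+1.
Proof. by case: (next_palP (pal_len k)). Qed.

Lemma pal_len_next k m : pal_len k < m -> pal_prefix w m -> pal_len k.+1 <= m.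
Proof. by case: (next_palP (pal_len k)) => _ _; apply. Qed.

Lemma pal_len_mono j k : j < k -> pal_len j < pal_len k.
Proof.
elim: k => [//|k IH] lt_jk; have := pal_len_lt k.
by case: (ltngtP j k) => [/IH | | ->]; lia.
Qed.

Lemma pal_len_inj j k : pal_len j = pal_len k -> j = k.
Proof. by move=> E; case: (ltngtP j k) => // /pal_len_mono; lia. Qed.

Lemma leq_pal_len k : k <= pal_len k.
Proof. by elim: k => [//|k IH]; have := pal_len_lt k; lia. Qed.

Lemma pal_lenP n : pal_prefix w n -> exists j, pal_len j = n.
Proof.
move=> pal_n; have ex_j : exists j, pal_len j <= n by exists 0.
have bound_j j : pal_len j <= n -> j <= n by have := leq_pal_len j; lia.
case: (ex_maxnP ex_j bound_j) => j le_j max_j; exists j.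
case: (ltngtP (pal_len j) n) => [lt_j | | //]; last lia.
by have := max_j j.+1 (pal_len_next lt_j pal_n); lia.
Qed.

Lemma pal_len_gap k : pal_len k.+1 <= (pal_len k).*2.+1.
Proof.
apply: (w_gap (pal_prefix_pal_len (k := k)) (pal_prefix_pal_len (k := k.+1)) (pal_len_lt k)).
by move=> u lt_u lt_u' pal_u; have := pal_len_next lt_u pal_u; lia.
Qed.

(* Reflect the palindrome of length [pal_len k] inside the one of length [pal_len k.+1]. *)
Lemma pal_prefix_reflect k : pal_len k.+1 != (pal_len k).*2.+1 ->
  pal_prefix w ((pal_len k).*2 - pal_len k.+1).
Proof.
move=> ne t ht; have gap := pal_len_gap k; have lt := pal_len_lt k.
have pal_a := pal_prefix_pal_len (k := k); have pal_b := pal_prefix_pal_len (k := k.+1).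
set a := pal_len k in ne ht gap lt pal_a pal_b *.
set b := pal_len k.+1 in ne ht gap lt pal_b *; have ne' : b <> a.*2.+1 by apply/eqP.
rewrite (pal_a t) ?(pal_a ((a.*2 - b).-1 - t)) ?(pal_b (a.-1 - t)); try lia.
by congr w; lia.
Qed.

Definition pal_index n := find (fun j => pal_len j == n) (iota 0 n.+1).

Lemma pal_indexK j : pal_index (pal_len j) = j.
Proof.
have has_j : has (fun j' => pal_len j' == pal_len j) (iota 0 (pal_len j).+1).
  by apply/hasP; exists j => //; rewrite mem_iota; have := leq_pal_len j; lia.
have := nth_find 0 has_j; rewrite -/(pal_index _).
rewrite nth_iota ?add0n => [/eqP/pal_len_inj //|].
by rewrite -(size_iota 0 (pal_len j).+1) -has_find.
Qed.

(* The [j+1]-st palindromic prefix, which [pi_(j+1)] should be, has length [pal_len j]. *)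
Definition psi_of_word n : (nat + A)%type :=
  if n is n'.+1 then
    if pal_len n == (pal_len n').*2.+1 then inr (w (pal_len n'))
    else inl (pal_index ((pal_len n').*2 - pal_len n)).+1
  else inl 0.

Lemma psi_of_word_index n : pal_len n.+1 != (pal_len n).*2.+1 ->
  exists j, psi_of_word n.+1 = inl j.+1 /\ pal_len j = (pal_len n).*2 - pal_len n.+1.
Proof.
move=> ne; rewrite /= (negPf ne).
have [j Ej] := pal_lenP (pal_prefix_reflect ne).
by exists j; rewrite -Ej pal_indexK.
Qed.

Lemma psi_of_word_valid : valid_psi psi_of_word.
Proof.
case=> [//|n] _; case: (boolP (pal_len n.+1 == (pal_len n).*2.+1)) => [/= -> // | ne].
have [j [-> Ej]] := psi_of_word_index ne.
have := pal_len_gap n; have := pal_len_lt n; have /eqP ne' := ne => lt gap /=.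
have lt_len : pal_len j < pal_len n by lia.
by case: (ltngtP j n) => [| /pal_len_mono | eq_jn]; [ | lia | rewrite eq_jn in lt_len]; lia.
Qed.

Lemma mkseq_pal_letter a : pal_prefix w a -> pal_prefix w a.*2.+1 ->
  mkseq w a ++ w a :: mkseq w a = mkseq w a.*2.+1.
Proof.
move=> pal_a pal_b; rewrite -addnn in pal_b *; apply: (eq_from_nth (x0 := w 0)).
  by rewrite size_cat [size (_ :: _)]/= !size_mkseq; lia.
rewrite size_cat [size (_ :: _)]/= !size_mkseq => t ht; rewrite nth_mkseq; last lia.
rewrite nth_cat size_mkseq; case: (ltngtP t a) => [lt_ta | lt_at | ->]; last by rewrite subnn.
  by rewrite nth_mkseq.
rewrite (_ : t - a = (t - a - 1).+1) /= ?nth_mkseq; try lia.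
by rewrite (pal_b t) ?(pal_a (t - a - 1)); [congr w| |]; lia.
Qed.

Lemma mkseq_pal_drop a b : a < b <= a.*2 -> pal_prefix w a -> pal_prefix w b ->
  mkseq w a ++ drop (a.*2 - b) (mkseq w a) = mkseq w b.
Proof.
move=> hab pal_a pal_b; rewrite -addnn in hab *.
apply: (eq_from_nth (x0 := w 0)); first by rewrite size_cat size_drop !size_mkseq; lia.
rewrite size_cat size_drop !size_mkseq => t ht; rewrite [RHS]nth_mkseq; last lia.
rewrite nth_cat size_mkseq; case: (ltnP t a) => [lt_ta | le_at]; first by rewrite nth_mkseq.
rewrite nth_drop nth_mkseq; last lia.
by rewrite (pal_b t) ?(pal_a (a + a - b + (t - a))); [congr w| |]; lia.
Qed.

Lemma pi_psi_of_word i : 0 < i -> Defs.pi psi_of_word i = mkseq w (pal_len i.-1).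
Proof.
elim/ltn_ind: i => -[//|[//|n]] IH _.
rewrite (pi_succ psi_of_word_valid (ltn0Sn n)) IH // !succnK.
case: (boolP (pal_len n.+1 == (pal_len n).*2.+1)) => [/eqP E | ne].
  have -> : psi_of_word n.+1 = inr (w (pal_len n)) by rewrite /= -/(pal_len n.+1) E eqxx.
  rewrite E mkseq_pal_letter //; first exact: pal_prefix_pal_len.
  by rewrite -E; apply: pal_prefix_pal_len.
have [j [-> Ej]] := psi_of_word_index ne.
have := pal_len_gap n; have := pal_len_lt n; have /eqP ne' := ne => lt gap.
have lt_jn : j < n.+1.
  case: (ltngtP j n.+1) => [//| /pal_len_mono | eq_jn]; [lia | by rewrite eq_jn in Ej; lia].
rewrite IH // succnK size_mkseq Ej mkseq_pal_drop //; last exact: pal_prefix_pal_len.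
  lia.
exact: pal_prefix_pal_len.
Qed.

Lemma psi_of_word_wpsi : is_wpsi psi_of_word w.
Proof. by move=> i i_gt0 k; rewrite pi_psi_of_word // size_mkseq => hk; rewrite nth_mkseq. Qed.

Lemma psi_of_word_exhaustive i : 0 < i -> exhaustive psi_of_word i.
Proof.
move=> i_gt0 k; rewrite pi_psi_of_word // size_mkseq => hk pal_k.
have [|j Ej] := pal_lenP (n := k).
  move=> t ht; have := nth_palindrome (w 0) pal_k (t := t).
  rewrite size_takel ?size_mkseq // !nth_take ?nth_mkseq; try lia.
  by move=> ->; [congr w|]; lia.
exists j.+1; last by rewrite pi_psi_of_word //= size_mkseq.
case: (leqP j i.-1) => [|lt_j]; first lia.
by have := pal_len_mono lt_j; lia.
Qed.

Lemma psi_of_word_reduced : reduced psi_of_word.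
Proof. exact/(reduced_exhaustiveP psi_of_word_valid)/psi_of_word_exhaustive. Qed.

End WordToPsi.

Theorem theorem4p14 (A : Type) (w : nat -> A) :
  inf_pal_prefixes w ->
  (pal_gap_cond w <->
     exists psi : nat -> (nat + A)%type, valid_psi psi /\ is_wpsi psi w) /\
  ((exists psi : nat -> (nat + A)%type, valid_psi psi /\ is_wpsi psi w) <->
     exists psi : nat -> (nat + A)%type, valid_psi psi /\ reduced psi /\ is_wpsi psi w) /\
  (forall psi1 psi2 : nat -> (nat + A)%type,
     valid_psi psi1 -> reduced psi1 -> is_wpsi psi1 w ->
     valid_psi psi2 -> reduced psi2 -> is_wpsi psi2 w ->
     forall n, 1 <= n -> psi1 n = psi2 n).
Proof.
move=> w_inf.
have gap_reduced : pal_gap_cond w ->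
    exists psi : nat -> (nat + A)%type, valid_psi psi /\ reduced psi /\ is_wpsi psi w.
  move=> w_gap; exists (psi_of_word w_inf); split; first exact: psi_of_word_valid.
  by split; [exact: psi_of_word_reduced | exact: psi_of_word_wpsi].
have psi_gap : (exists psi : nat -> (nat + A)%type, valid_psi psi /\ is_wpsi psi w) ->
    pal_gap_cond w.
  by case=> psi [psi_valid w_psi]; exact: pal_gap_cond_wpsi psi_valid w_psi.
split; [split | split; [split |]].
- by move/gap_reduced => [psi [? [_ ?]]]; exists psi.
- exact: psi_gap.
- by move/psi_gap/gap_reduced.
- by case=> psi [? [_ ?]]; exists psi.
- move=> psi1 psi2 valid1 red1 w_psi1 valid2 red2 w_psi2 n n_gt0.
  exact: psi_reduced_unique valid1 valid2 red1 red2 w_psi1 w_psi2 n n_gt0.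
Qed.
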